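(* Let $f\in C([0,1])$ and $\varepsilon>0$. If $K\in\mathbb{N}^+$ satisfies $|f(x_1)-f(x_2)|<\varepsilon/2$ for all $x_1,x_2\in[0,1]$ with $|x_1-x_2|<1/K$, then there exists a function $\phi$ generated by a $\sigma$-activated network with width $2$ and depth $3$ such that $\|\phi\|_{L^\infty([0,1])}\le\|f\|_{L^\infty([0,1])}+1$ and $|\phi(x)-f(x)|<\varepsilon$ for all $x\in\bigcup_{k=0}^{K-1}\big[\tfrac{2k}{2K},\tfrac{2k+1}{2K}\big]$.
   Context: Let $\sigma_1:\mathbb{R}\to\mathbb{R}$ be the continuous triangular-wave function of period $2$: $\sigma_1(x)=|x|$ for $x\in[-1,1]$, $\sigma_1(x+2)=\sigma_1(x)$. The activation is $\sigma(x)=\sigma_1(x)$ for $x\ge0$ and $\sigma(x)=x/(|x|+1)$ for $x<0$, applied entrywise. A function generated by a $\sigma$-activated network with one input, width $N$ and depth $L$ is a function of the form $\mathcal{L}_{\ell}\circ\sigma\circ\mathcal{L}_{\ell-1}\circ\cdots\circ\sigma\circ\mathcal{L}_0$ with $\ell\le L$ hidden layers, affine maps $\mathcal{L}_i$, $\mathcal{L}_0$ with domain $\mathbb{R}$, $\mathcal{L}_\ell$ with codomain $\mathbb{R}$, and at most $N$ neurons in each hidden layer. *)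

From Stdlib Require Import Reals Lra ZArith List.
Open Scope R_scope.

(* Triangular wave of period 2: sigma1 x = |x| on [-1,1], sigma1 (x+2) = sigma1 x.
   Written as |x - 2*floor((x+1)/2)|. *)
Definition sigma1 (x : R) : R :=
  Rabs (x - 2 * IZR (Int_part ((x + 1) / 2)))
  (* Int_part is floor in Stdlib *).

Definition sigma (x : R) : R :=
  if Rle_dec 0 x then sigma1 x else x / (Rabs x + 1).

Fixpoint fsum (d : nat) (f : nat -> R) : R :=
  match d with
  | O => 0
  | S d' => fsum d' f + f d'
  end.

(* A hidden layer: output width n, weight matrix W (W j i = weight from input
   neuron i to output neuron j), bias b. Vectors are nat -> R, only the first
   (current width) entries are meaningful. *)
Record layer := mkLayer { lw : nat ; lW : nat -> nat -> R ; lb : nat -> R }.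

Fixpoint run_hidden (ls : list layer) (d : nat) (v : nat -> R) : nat * (nat -> R) :=
  match ls with
  | nil => (d, v)
  | l :: ls' =>
      run_hidden ls' (lw l)
        (fun j => sigma (fsum d (fun i => lW l j i * v i) + lb l j))
  end.

Definition realize (ls : list layer) (w : nat -> R) (c : R) (x : R) : R :=
  let '(d, v) := run_hidden ls 1%nat (fun _ => x) in
  fsum d (fun i => w i * v i) + c.

Definition generated_by_net (N L : nat) (phi : R -> R) : Prop :=
  exists (ls : list layer) (w : nat -> R) (c : R),
    (length ls <= L)%nat /\
    Forall (fun l => (lw l <= N)%nat) ls /\
    forall x, phi x = realize ls w c x.

Definition continuous_on01 (f : R -> R) : Prop :=
  forall x, 0 <= x <= 1 ->
    forall e, 0 < e -> exists d, 0 < d /\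
      forall y, 0 <= y <= 1 -> Rabs (y - x) < d -> Rabs (f y - f x) < e.

(* The set { |f x| : x in [0,1] }; its least upper bound is ||f||_{L^oo([0,1])}
   for continuous f. *)
Definition abs_image01 (f : R -> R) (r : R) : Prop :=
  exists x, 0 <= x <= 1 /\ r = Rabs (f x).

(* The first two layers collapse the k-th piece [2k/(2K), (2k+1)/(2K)] of [0, 1] onto the
   single value -(k + L) K!, because sigma (2 K x) = 2 K x - 2 k there; the next activation
   turns it into -1 + 1/m_k with m_k = 1 + (k + L) K!.  Any prime dividing two of these
   moduli divides their difference (j - i) K! and hence K!, which is impossible, so by the
   Chinese remainder theorem a single integer W has a prescribed residue r_k modulo every
   m_k.  The triangular wave evaluated at 2 W / m_k then returns 2 r_k / m_k, and with
   r_k = floor (m_k t_k / 2), where t_k in [0, 1] encodes f (k/K), the output layer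
   reproduces f (k/K) up to 4 M / m_k < eps / 2 once L is large; the modulus of continuity
   accounts for the remaining eps / 2. *)

From Pilot Require Import Defs.
From Stdlib Require Import Reals ZArith Znumtheory Lra Lia.
Open Scope R_scope.

Section ChineseRemainder.
Local Open Scope Z_scope.

Fixpoint prod_upto (m : nat -> Z) (n : nat) : Z :=
  match n with O => 1 | S n' => prod_upto m n' * m n' end.

Lemma prod_upto_pos (m : nat -> Z) (n : nat) :
  (forall i, (i < n)%nat -> 0 < m i) -> 0 < prod_upto m n.
Proof.
  induction n as [|n IH]; simpl; intros Hpos; [lia|].
  apply Z.mul_pos_pos; [apply IH; intros|]; apply Hpos; lia.
Qed.

Lemma divide_prod_upto (m : nat -> Z) (n i : nat) :
  (i < n)%nat -> (m i | prod_upto m n).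
Proof.
  induction n as [|n IH]; simpl; intros Hi; [lia|].
  destruct (Nat.eq_dec i n) as [->|Hin].
  - apply Z.divide_factor_r.
  - apply Z.divide_mul_l, IH. lia.
Qed.

Lemma rel_prime_prod_upto (m : nat -> Z) (n : nat) (a : Z) :
  (forall i, (i < n)%nat -> rel_prime (m i) a) -> rel_prime (prod_upto m n) a.
Proof.
  induction n as [|n IH]; simpl; intros Hcop; [apply rel_prime_1|].
  apply rel_prime_sym, rel_prime_mult; apply rel_prime_sym;
    [apply IH; intros|]; apply Hcop; lia.
Qed.

Lemma chinese_remainder (m r : nat -> Z) (n : nat) :
  (forall i j, (i < n)%nat -> (j < n)%nat -> i <> j -> rel_prime (m i) (m j)) ->
  exists W, forall i, (i < n)%nat -> (m i | W - r i).
Proof.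
  induction n as [|n IH]; intros Hcop.
  - exists 0. intros i Hi. lia.
  - destruct IH as [W HW]; [intros; apply Hcop; lia|].
    set (P := prod_upto m n).
    assert (HP : rel_prime P (m n))
      by (apply rel_prime_prod_upto; intros; apply Hcop; lia).
    destruct (rel_prime_bezout _ _ HP) as [u v Huv].
    exists (W + u * P * (r n - W)).
    intros i Hi. destruct (Nat.eq_dec i n) as [->|Hin].
    + replace (W + u * P * (r n - W) - r n) with (v * (W - r n) * m n)
        by (replace (u * P) with (1 - v * m n) by lia; ring).
      apply Z.divide_factor_r.
    + replace (W + u * P * (r n - W) - r i) with (W - r i + u * (r n - W) * P)
        by ring.
      apply Z.divide_add_r; [apply HW; lia|].
      apply Z.divide_mul_r, divide_prod_upto. lia.
Qed.

Lemma chinese_remainder_nonneg (m r : nat -> Z) (n : nat) :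
  (forall i, (i < n)%nat -> 0 < m i) ->
  (forall i j, (i < n)%nat -> (j < n)%nat -> i <> j -> rel_prime (m i) (m j)) ->
  exists W, 0 <= W /\ forall i, (i < n)%nat -> (m i | W - r i).
Proof.
  intros Hpos Hcop.
  destruct (chinese_remainder m r n Hcop) as [W HW].
  set (P := prod_upto m n).
  assert (HP : 0 < P) by (apply prod_upto_pos; exact Hpos).
  exists (W mod P). split; [apply Z.mod_pos_bound; exact HP|].
  intros i Hi. rewrite Z.mod_eq by lia.
  replace (W - P * (W / P) - r i) with (W - r i + (- (W / P)) * P) by ring.
  apply Z.divide_add_r; [apply HW; exact Hi|].
  apply Z.divide_mul_r, divide_prod_upto. exact Hi.
Qed.

Lemma divide_fact (d : Z) (K : nat) : 1 <= d <= Z.of_nat K -> (d | Z.of_nat (fact K)).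
Proof.
  induction K as [|K IH]; intros Hd; [lia|].
  rewrite fact_simpl, Nat2Z.inj_mul.
  destruct (Z.eq_dec d (Z.of_nat (S K))) as [->|Hne].
  - apply Z.divide_factor_l.
  - apply Z.divide_mul_r, IH. lia.
Qed.

Lemma rel_prime_one_plus_mul (a b N : Z) :
  (b - a | N) -> rel_prime (1 + a * N) (1 + b * N).
Proof.
  intros Hab.
  assert (Hone : forall x, (x | 1 + a * N) -> (x | N) -> (x | 1)).
  { intros x Ha HN. replace 1 with (1 + a * N - a * N) by ring.
    apply Z.divide_sub_r; [exact Ha | apply Z.divide_mul_r; exact HN]. }
  apply Zis_gcd_intro; try apply Z.divide_1_l.
  intros x Ha Hb. apply Hone; [exact Ha|].
  assert (HxN : rel_prime x N).
  { apply Zis_gcd_intro; try apply Z.divide_1_l.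
    intros y Hyx HyN. apply Hone; [apply (Z.divide_trans _ x)|]; assumption. }
  apply (Z.divide_trans _ (b - a)); [|exact Hab].
  apply (Gauss _ N); [|exact HxN].
  replace (N * (b - a)) with (1 + b * N - (1 + a * N)) by ring.
  apply Z.divide_sub_r; assumption.
Qed.

Definition piece_modulus (K L k : nat) : Z :=
  1 + (Z.of_nat k + Z.of_nat L) * Z.of_nat (fact K).

Lemma rel_prime_piece_modulus (K L i j : nat) :
  (i < K)%nat -> (j < K)%nat -> i <> j ->
  rel_prime (piece_modulus K L i) (piece_modulus K L j).
Proof.
  intros Hi Hj Hij. apply rel_prime_one_plus_mul.
  apply Z.divide_abs_l, divide_fact. lia.
Qed.

End ChineseRemainder.

Lemma piece_modulus_pos (K L k : nat) : 0 < IZR (piece_modulus K L k).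
Proof. apply IZR_lt. unfold piece_modulus. lia. Qed.

Lemma IZR_piece_modulus (K L k : nat) :
  IZR (piece_modulus K L k) = 1 + (INR k + INR L) * INR (fact K).
Proof.
  unfold piece_modulus. rewrite plus_IZR, mult_IZR, plus_IZR, <- !INR_IZR_INZ.
  reflexivity.
Qed.

Lemma piece_modulus_gt (K L k : nat) : INR L < IZR (piece_modulus K L k).
Proof.
  rewrite IZR_piece_modulus.
  pose proof (pos_INR k). pose proof (pos_INR L).
  assert (1 <= INR (fact K)) by (apply (le_INR 1), lt_O_fact). nra.
Qed.

Lemma div_piece_modulus_lt (K L k : nat) (C e : R) :
  0 < e -> C / e < INR L -> C / IZR (piece_modulus K L k) < e.
Proof.
  intros He HL.
  pose proof (piece_modulus_gt K L k) as Hm. pose proof (piece_modulus_pos K L k) as Hm0.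
  assert (HC : C < e * INR L).
  { replace C with (C / e * e) by (field; lra). nra. }
  apply (Rmult_lt_reg_r (IZR (piece_modulus K L k))); [exact Hm0|].
  replace (C / IZR (piece_modulus K L k) * IZR (piece_modulus K L k)) with C by (field; lra).
  nra.
Qed.

Lemma sigma1_periodic (x : R) (n : Z) :
  -1 <= x - 2 * IZR n <= 1 -> sigma1 x = Rabs (x - 2 * IZR n).
Proof.
  intros Hx. unfold sigma1.
  destruct (Rle_lt_dec 1 (x - 2 * IZR n)) as [Htop|Hin].
  - (* at the right end of the period, Int_part rounds up to n + 1 *)
    rewrite <- (Int_part_spec ((x + 1) / 2) (n + 1)) by (rewrite plus_IZR; lra).
    replace x with (2 * IZR n + 1) by lra. rewrite plus_IZR.
    replace (2 * IZR n + 1 - 2 * (IZR n + 1)) with (- 1) by ring.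
    replace (2 * IZR n + 1 - 2 * IZR n) with 1 by ring.
    rewrite Rabs_R1. unfold Rabs; destruct (Rcase_abs (-1)); lra.
  - rewrite <- (Int_part_spec ((x + 1) / 2) n) by lra. reflexivity.
Qed.

Lemma sigma1_linear (x : R) (n : Z) :
  0 <= x - 2 * IZR n <= 1 -> sigma1 x = x - 2 * IZR n.
Proof.
  intros Hx. rewrite (sigma1_periodic x n); [apply Rabs_pos_eq|]; lra.
Qed.

Lemma sigma1_bounds (x : R) : 0 <= sigma1 x <= 1.
Proof.
  unfold sigma1. destruct (base_Int_part ((x + 1) / 2)).
  split; [apply Rabs_pos | apply Rabs_le; lra].
Qed.

Lemma sigma_nonneg (x : R) : 0 <= x -> Defs.sigma x = sigma1 x.
Proof. intros Hx. unfold Defs.sigma. destruct (Rle_dec 0 x); [reflexivity | lra]. Qed.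

Lemma sigma_nonpos (x : R) : x <= 0 -> Defs.sigma x = -1 + 1 / (1 - x).
Proof.
  intros Hx. unfold Defs.sigma. destruct (Rle_dec 0 x).
  - replace x with 0 by lra. rewrite (sigma1_linear 0 0) by lra. field.
  - rewrite Rabs_left by lra. field. lra.
Qed.

Lemma sigma_gt_neg1 (x : R) : -1 < Defs.sigma x.
Proof.
  destruct (Rle_dec 0 x).
  - rewrite sigma_nonneg by lra. pose proof (sigma1_bounds x). lra.
  - rewrite sigma_nonpos by lra.
    assert (0 < 1 / (1 - x)) by (apply Rdiv_lt_0_compat; lra). lra.
Qed.

Lemma sigma1_scaled_residue (W q r : Z) (m : R) :
  0 < m -> IZR W = IZR q * m + IZR r -> 0 <= 2 * IZR r <= m ->
  sigma1 (2 * IZR W / m) = 2 * IZR r / m.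
Proof.
  intros Hm HW Hr.
  replace (2 * IZR W / m) with (2 * IZR r / m + 2 * IZR q) by (rewrite HW; field; lra).
  rewrite (sigma1_linear _ q); [ring|].
  replace (2 * IZR r / m + 2 * IZR q - 2 * IZR q) with (2 * IZR r / m) by ring.
  assert (He : 2 * IZR r / m * m = 2 * IZR r) by (field; lra).
  split; nra.
Qed.

Lemma sigma1_decodes (W mz : Z) (t : R) :
  0 < IZR mz -> 0 <= t <= 1 -> (mz | W - Int_part (t * IZR mz / 2)) ->
  Rabs (sigma1 (2 * IZR W / IZR mz) - t) < 2 / IZR mz.
Proof.
  intros Hm Ht [q Hq].
  set (m := IZR mz) in *. set (r := Int_part (t * m / 2)) in *.
  destruct (base_Int_part (t * m / 2)) as [Hr1 Hr2]. fold r in Hr1, Hr2.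
  assert (HW : IZR W = IZR q * m + IZR r)
    by (unfold m; rewrite <- mult_IZR, <- plus_IZR; f_equal; lia).
  assert (Hr0 : 0 <= IZR r).
  { apply IZR_le. assert (-1 < r)%Z; [apply lt_IZR; nra | lia]. }
  rewrite (sigma1_scaled_residue W q r m Hm HW) by nra.
  assert (He : 2 * IZR r / m * m = 2 * IZR r) by (field; lra).
  assert (H2 : 2 / m * m = 2) by (field; lra).
  apply Rabs_def1; nra.
Qed.

Definition on_piece (K k : nat) (x : R) : Prop :=
  2 * INR k / (2 * INR K) <= x <= (2 * INR k + 1) / (2 * INR K).

Lemma on_piece_scaled (K k : nat) (x : R) :
  (0 < K)%nat -> on_piece K k x -> 2 * INR k <= 2 * INR K * x <= 2 * INR k + 1.
Proof.
  intros HK [Hlo Hhi]. apply lt_0_INR in HK.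
  assert (E : forall a, a = 2 * INR K * (a / (2 * INR K))) by (intros; field; lra).
  split; [rewrite (E (2 * INR k)) | rewrite (E (2 * INR k + 1))];
    apply Rmult_le_compat_l; lra.
Qed.

Lemma on_piece_in_unit (K k : nat) (x : R) :
  (k < K)%nat -> on_piece K k x -> 0 <= x <= 1.
Proof.
  intros Hk Hx. pose proof (on_piece_scaled K k x ltac:(lia) Hx).
  assert (INR k + 1 <= INR K) by (rewrite <- S_INR; apply le_INR; lia).
  pose proof (pos_INR k). split; nra.
Qed.

Lemma on_piece_near_grid (K k : nat) (x : R) :
  (0 < K)%nat -> on_piece K k x -> Rabs (INR k / INR K - x) < 1 / INR K.
Proof.
  intros HK Hx. pose proof (on_piece_scaled K k x HK Hx).
  apply lt_0_INR in HK.
  assert (Ek : INR k / INR K * INR K = INR k) by (field; lra).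
  assert (E1 : 1 / INR K * INR K = 1) by (field; lra).
  apply Rabs_def1; nra.
Qed.

Lemma grid_point_in_unit (K k : nat) : (k <= K)%nat -> (0 < K)%nat -> 0 <= INR k / INR K <= 1.
Proof.
  intros Hk HK. apply le_INR in Hk. apply lt_0_INR in HK.
  assert (E : INR k / INR K * INR K = INR k) by (field; lra).
  pose proof (pos_INR k). split; nra.
Qed.

Definition net_layers (K N L W : R) : list layer :=
  mkLayer 2 (fun j _ => match j with O => 1 | _ => 2 * K end) (fun _ => 0) ::
  mkLayer 1 (fun _ i => match i with O => - (N * K) | _ => N / 2 end) (fun _ => - (L * N)) ::
  mkLayer 1 (fun _ _ => 2 * W) (fun _ => 2 * W) :: nil.

Lemma realize_net_layers (K N L W a c x : R) :
  realize (net_layers K N L W) (fun _ => a) c x =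
  a * Defs.sigma (2 * W * Defs.sigma (N / 2 * Defs.sigma (2 * K * x) - N * K * Defs.sigma x - L * N) + 2 * W) + c.
Proof.
  unfold realize; cbn.
  rewrite !Rplus_0_l, !Rplus_0_r, Rmult_1_l.
  do 6 f_equal. ring.
Qed.

Lemma net_layers_generated (K N L W : R) (w : nat -> R) (c : R) :
  generated_by_net 2 3 (realize (net_layers K N L W) w c).
Proof.
  exists (net_layers K N L W), w, c.
  split; [simpl; lia | split; [repeat constructor; simpl; lia | reflexivity]].
Qed.

Lemma realize_net_layers_bound (K N L W M x : R) :
  0 <= W -> 0 <= M -> Rabs (realize (net_layers K N L W) (fun _ => 2 * M) (- M) x) <= M.
Proof.
  intros HW HM. rewrite realize_net_layers.
  match goal with |- context [Defs.sigma (2 * W * Defs.sigma ?z + 2 * W)] =>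
    pose proof (sigma_gt_neg1 z) as Hz; set (y := 2 * W * Defs.sigma z + 2 * W) end.
  rewrite (sigma_nonneg y) by (unfold y; nra).
  pose proof (sigma1_bounds y). apply Rabs_le. nra.
Qed.

Lemma realize_net_layers_on_piece (K k : nat) (N L W a c x : R) :
  (k < K)%nat -> on_piece K k x -> 0 <= (INR k + L) * N -> 0 <= W ->
  realize (net_layers (INR K) N L W) (fun _ => a) c x =
  a * sigma1 (2 * W / (1 + (INR k + L) * N)) + c.
Proof.
  intros Hk Hx HkLN HW.
  pose proof (on_piece_scaled K k x ltac:(lia) Hx) as Hs.
  pose proof (on_piece_in_unit K k x Hk Hx) as Hx01.
  assert (Hid : Defs.sigma x = x)
    by (rewrite sigma_nonneg, (sigma1_linear x 0); simpl; lra).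
  assert (Hfrac : Defs.sigma (2 * INR K * x) = 2 * INR K * x - 2 * INR k).
  { rewrite sigma_nonneg by (pose proof (pos_INR k); lra).
    rewrite (sigma1_linear _ (Z.of_nat k)); rewrite <- INR_IZR_INZ; lra. }
  rewrite realize_net_layers, Hid, Hfrac.
  replace (N / 2 * (2 * INR K * x - 2 * INR k) - N * INR K * x - L * N)
    with (- ((INR k + L) * N)) by field.
  rewrite (sigma_nonpos (- ((INR k + L) * N))) by lra.
  replace (2 * W * (-1 + 1 / (1 - - ((INR k + L) * N))) + 2 * W)
    with (2 * W / (1 + (INR k + L) * N)) by (field; lra).
  rewrite sigma_nonneg; [reflexivity|].
  apply Rmult_le_pos; [lra | left; apply Rinv_0_lt_compat; lra].
Qed.

Fixpoint max_abs_upto (g : nat -> R) (n : nat) : R :=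
  match n with O => 0 | S n' => Rmax (max_abs_upto g n') (Rabs (g n')) end.

Lemma max_abs_upto_nonneg (g : nat -> R) (n : nat) : 0 <= max_abs_upto g n.
Proof.
  induction n as [|n IH]; simpl; [lra|].
  eapply Rle_trans; [exact IH | apply Rmax_l].
Qed.

Lemma abs_le_max_abs_upto (g : nat -> R) (n k : nat) :
  (k < n)%nat -> Rabs (g k) <= max_abs_upto g n.
Proof.
  induction n as [|n IH]; simpl; intros Hk; [lia|].
  destruct (Nat.eq_dec k n) as [->|Hkn]; [apply Rmax_r|].
  eapply Rle_trans; [apply IH; lia | apply Rmax_l].
Qed.

Lemma max_abs_upto_le (g : nat -> R) (n : nat) (B : R) :
  0 <= B -> (forall k, (k < n)%nat -> Rabs (g k) <= B) -> max_abs_upto g n <= B.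
Proof.
  induction n as [|n IH]; simpl; intros HB Hg; [exact HB|].
  apply Rmax_lub; [apply IH; [exact HB | intros k Hk]|]; apply Hg; lia.
Qed.

Lemma max_abs_grid_le_lub (f : R -> R) (K : nat) (normf : R) :
  (0 < K)%nat -> is_lub (abs_image01 f) normf ->
  max_abs_upto (fun k => f (INR k / INR K)) K <= normf.
Proof.
  intros HK [Hub _].
  assert (Hg : forall k, (k < K)%nat -> Rabs (f (INR k / INR K)) <= normf).
  { intros k Hk. apply Hub. exists (INR k / INR K).
    split; [apply grid_point_in_unit; lia | reflexivity]. }
  apply max_abs_upto_le; [|exact Hg].
  eapply Rle_trans; [apply Rabs_pos | apply (Hg 0%nat HK)].
Qed.

Definition memory_net (K L : nat) (W : Z) (M : R) : R -> R :=
  realize (net_layers (INR K) (INR (fact K)) (INR L) (IZR W)) (fun _ => 2 * M) (- M).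

(* The value y in [-M, M] is stored as t = (y + M) / (2 M) in [0, 1], quantized to the
   residue floor (m t / 2) modulo m. *)
Definition residue (M y : R) (m : Z) : Z := Int_part ((y + M) / (2 * M) * IZR m / 2).

Lemma memory_net_recovers (K L k : nat) (W : Z) (M y x : R) :
  (k < K)%nat -> on_piece K k x -> (0 <= W)%Z -> 0 < M -> Rabs y <= M ->
  (piece_modulus K L k | W - residue M y (piece_modulus K L k))%Z ->
  Rabs (memory_net K L W M x - y) < 4 * M / IZR (piece_modulus K L k).
Proof.
  intros Hk Hx HW HM Hy Hdiv.
  pose proof (piece_modulus_pos K L k) as Hm.
  set (m := piece_modulus K L k) in *.
  set (t := (y + M) / (2 * M)).
  assert (Ht : 0 <= t <= 1).
  { assert (E : t * (2 * M) = y + M) by (unfold t; field; lra).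
    revert Hy; unfold Rabs; destruct (Rcase_abs y); intros; split; nra. }
  pose proof (sigma1_decodes W m t Hm Ht Hdiv) as Hdec.
  unfold memory_net. rewrite (realize_net_layers_on_piece K k).
  - rewrite <- IZR_piece_modulus. fold m.
    replace (2 * M * sigma1 (2 * IZR W / IZR m) + - M - y)
      with (2 * M * (sigma1 (2 * IZR W / IZR m) - t)) by (unfold t; field; lra).
    rewrite Rabs_mult, (Rabs_pos_eq (2 * M)) by lra.
    replace (4 * M / IZR m) with (2 * M * (2 / IZR m)) by (field; lra).
    apply Rmult_lt_compat_l; lra.
  - exact Hk.
  - exact Hx.
  - pose proof (pos_INR k). pose proof (pos_INR L). pose proof (pos_INR (fact K)). nra.
  - apply IZR_le, HW.
Qed.

Theorem theorem14 (f : R -> R) (eps : R) (K : nat) :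
  continuous_on01 f ->
  0 < eps ->
  (1 <= K)%nat ->
  (forall x1 x2, 0 <= x1 <= 1 -> 0 <= x2 <= 1 ->
     Rabs (x1 - x2) < 1 / INR K -> Rabs (f x1 - f x2) < eps / 2) ->
  exists phi : R -> R,
    generated_by_net 2 3 phi /\
    (forall normf, is_lub (abs_image01 f) normf ->
       forall x, 0 <= x <= 1 -> Rabs (phi x) <= normf + 1) /\
    (forall x, (exists k : nat, (k < K)%nat /\
                  2 * INR k / (2 * INR K) <= x <= (2 * INR k + 1) / (2 * INR K)) ->
       Rabs (phi x - f x) < eps).
Proof.
  intros _ Heps HK Hunif.
  set (g := fun k : nat => f (INR k / INR K)).
  set (M := max_abs_upto g K + 1).
  assert (HM : 1 <= M) by (pose proof (max_abs_upto_nonneg g K); unfold M; lra).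
  destruct (INR_unbounded (4 * M / (eps / 2))) as [L HL].
  destruct (chinese_remainder_nonneg (piece_modulus K L)
              (fun k => residue M (g k) (piece_modulus K L k)) K) as [W [HW0 HW]].
  { intros k _. apply lt_IZR, piece_modulus_pos. }
  { intros i j. apply rel_prime_piece_modulus. }
  exists (memory_net K L W M). split; [apply net_layers_generated | split].
  - intros normf Hlub x _.
    eapply Rle_trans; [apply realize_net_layers_bound; [apply IZR_le, HW0 | lra] |].
    pose proof (max_abs_grid_le_lub f K normf HK Hlub). unfold M, g. lra.
  - intros x [k [Hk Hx]].
    assert (Hnet : Rabs (memory_net K L W M x - g k) < eps / 2).
    { eapply Rlt_trans; [|apply (div_piece_modulus_lt K L k); [lra | exact HL]].
      apply memory_net_recovers; try assumption; try lra.
      - pose proof (abs_le_max_abs_upto g K k Hk). unfold M. lra.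
      - apply HW, Hk. }
    assert (Hfx : Rabs (g k - f x) < eps / 2).
    { apply Hunif; [apply grid_point_in_unit; lia | apply (on_piece_in_unit K k); assumption |].
      apply on_piece_near_grid; [lia | exact Hx]. }
    replace (memory_net K L W M x - f x) with ((memory_net K L W M x - g k) + (g k - f x)) by ring.
    eapply Rle_lt_trans; [apply Rabs_triang | lra].
Qed.
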